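(* Let $E\subseteq\mathbb{R}$, let $\theta=(k_r)$ be a lacunary sequence, and let $f:E\to\mathbb{R}$ be Abel continuous on $E$. Then $f$ is lacunary statistically sequentially continuous on $E$ (with respect to $\theta$).
   Context: A sequence $(p_n)$ of real numbers is Abel convergent to $\ell$ if $\sum_{k=0}^{\infty}p_k x^k$ converges for every $0\le x<1$ and $\lim_{x\to 1^-}(1-x)\sum_{k=0}^{\infty}p_k x^k=\ell$. $f$ is Abel continuous on $E$ if for every sequence $(p_n)$ in $E$ Abel convergent to some $\ell\in E$, $(f(p_n))$ is Abel convergent to $f(\ell)$. A lacunary sequence is an increasing sequence $\theta=(k_r)_{r\ge0}$ of nonnegative integers with $k_0=0$, $h_r=k_r-k_{r-1}\to\infty$, and $\liminf_r k_r/k_{r-1}>1$; put $I_r=(k_{r-1},k_r]$. A sequence $(p_k)$ is lacunary statistically convergent to $\ell$ if for every $\varepsilon>0$, $\lim_{r\to\infty}\frac{1}{h_r}|\{k\in I_r:|p_k-\ell|\ge\varepsilon\}|=0$. $f$ is lacunary statistically sequentially continuous on $E$ if for every sequence $(p_n)$ in $E$ lacunary statistically convergent to some $\ell\in E$, $(f(p_n))$ is lacunary statistically convergent to $f(\ell)$. *)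

From Stdlib Require Import Reals List.
From Coquelicot Require Import Coquelicot.
Open Scope R_scope.

Definition abel_convergent (p : nat -> R) (l : R) : Prop :=
  (forall x : R, 0 <= x < 1 -> ex_series (fun k => p k * x ^ k)) /\
  filterlim (fun x => (1 - x) * Series (fun k => p k * x ^ k))
            (at_left 1) (locally l).

Definition abel_continuous_on (E : R -> Prop) (f : R -> R) : Prop :=
  forall (p : nat -> R) (l : R),
    (forall n, E (p n)) -> E l -> abel_convergent p l ->
    abel_convergent (fun n => f (p n)) (f l).

Definition lacunary (k : nat -> nat) : Prop :=
  k 0%nat = 0%nat /\
  (forall r, (k r < k (S r))%nat) /\
  is_lim_seq (fun r => INR (k (S r) - k r)) p_infty /\
  Rbar_lt (Finite 1) (LimInf_seq (fun r => INR (k (S r)) / INR (k r))).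

Definition lac_h (k : nat -> nat) (r : nat) : nat := (k r - k (pred r))%nat.

(* |{ j in I_r = (k_{r-1}, k_r] : |p_j - l| >= eps }|, for r >= 1 *)
Definition lac_count (k : nat -> nat) (p : nat -> R) (l eps : R) (r : nat) : nat :=
  length (filter (fun j => if Rle_dec eps (Rabs (p j - l)) then true else false)
                 (seq (S (k (pred r))) (lac_h k r))).

Definition lacunary_statistically_convergent (k : nat -> nat) (p : nat -> R) (l : R) : Prop :=
  forall eps : R, 0 < eps ->
    is_lim_seq (fun r => INR (lac_count k p l eps r) / INR (lac_h k r)) 0.

Definition lacunary_statistically_sequentially_continuous_on
    (k : nat -> nat) (E : R -> Prop) (f : R -> R) : Prop :=
  forall (p : nat -> R) (l : R),
    (forall n, E (p n)) -> E l -> lacunary_statistically_convergent k p l ->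
    lacunary_statistically_convergent k (fun n => f (p n)) (f l).

(* Abel continuity implies ordinary continuity on E: if the values of f stayed
   eps above f l at points x -> l, pick such points q_n with |q_n - l| <= 2^-n.
   Summable deviations make (q_n) Abel convergent to l, so (f q_n) is Abel
   convergent to f l; but every Abel mean of (f q_n) is at least f l + eps.
   Applying this to f and -f gives an eps-delta modulus at l, and an eps-delta
   modulus makes the exceptional set {j in I_r : |f p_j - f l| >= eps} a subset
   of {j in I_r : |p_j - l| >= delta}, whose density tends to 0. *)

From Stdlib Require Import Reals List Lra Lia Classical ClassicalEpsilon.
From Coquelicot Require Import Coquelicot.
Open Scope R_scope.

Definition abel_mean (a : nat -> R) (x : R) : R :=
  (1 - x) * Series (fun k => a k * x ^ k).

Lemma is_series_geom_unit (x : R) :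
  0 <= x < 1 -> is_series (fun k => x ^ k) (/ (1 - x)).
Proof. intros Hx; apply is_series_geom; rewrite Rabs_right; lra. Qed.

Lemma ex_series_scal_geom (c x : R) :
  0 <= x < 1 -> ex_series (fun k => c * x ^ k).
Proof.
  intros Hx; exact (ex_series_scal_l c _ (ex_intro _ _ (is_series_geom_unit x Hx))).
Qed.

Lemma Series_nonneg (a : nat -> R) :
  (forall n, 0 <= a n) -> ex_series a -> 0 <= Series a.
Proof.
  intros Ha Hex.
  replace 0 with (Series (fun n => 0 * a n)) by (rewrite Series_scal_l; ring).
  apply Series_le; [|exact Hex].
  intros n; specialize (Ha n); split; lra.
Qed.

Lemma pow_unit_bounds (x : R) (n : nat) : 0 <= x <= 1 -> 0 <= x ^ n <= 1.
Proof.
  intros Hx; split; [apply pow_le; lra|].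
  rewrite <- (pow1 n); apply pow_incr; lra.
Qed.

Lemma abel_mean_sub_const (a : nat -> R) (c x : R) :
  0 <= x < 1 -> ex_series (fun k => a k * x ^ k) ->
  abel_mean a x - c = abel_mean (fun k => a k - c) x.
Proof.
  intros Hx Ha; unfold abel_mean.
  assert (Hc : ex_series (fun k => c * x ^ k)) by apply ex_series_scal_geom, Hx.
  rewrite (Series_ext (fun k => (a k - c) * x ^ k)
             (fun k => a k * x ^ k - c * x ^ k)) by (intros; ring).
  rewrite Series_minus, (Series_scal_l c (fun k => x ^ k)),
    (is_series_unique _ _ (is_series_geom_unit x Hx)) by assumption.
  field; lra.
Qed.

Lemma abel_mean_ge (a : nat -> R) (m x : R) :
  0 <= x < 1 -> (forall k, m <= a k) -> ex_series (fun k => a k * x ^ k) ->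
  m <= abel_mean a x.
Proof.
  intros Hx Hm Ha; unfold abel_mean.
  assert (Hsub := abel_mean_sub_const a m x Hx Ha); unfold abel_mean in Hsub.
  assert (Hdev : 0 <= Series (fun k => (a k - m) * x ^ k)).
  { apply Series_nonneg.
    - intros n; pose proof (pow_unit_bounds x n ltac:(lra)); pose proof (Hm n).
      apply Rmult_le_pos; lra.
    - apply ex_series_ext with (fun k => plus (a k * x ^ k) (opp (m * x ^ k))).
      + intros; unfold plus, opp; simpl; ring.
      + exact (ex_series_minus _ _ Ha (ex_series_scal_geom m x Hx)). }
  assert (0 <= (1 - x) * Series (fun k => (a k - m) * x ^ k))
    by (apply Rmult_le_pos; lra).
  lra.
Qed.

Lemma abel_limit_ge (a : nat -> R) (L m : R) :
  abel_convergent a L -> (forall k, m <= a k) -> m <= L.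
Proof.
  intros [Hex Hlim] Hm.
  apply (closed_filterlim_loc (F := at_left 1) (fun x => abel_mean a x)
           (fun y => m <= y) L Hlim); [|apply closed_ge].
  exists (mkposreal 1 Rlt_0_1); intros y Hy Hy1.
  change (Rabs (y - 1) < 1) in Hy; apply Rabs_def2 in Hy.
  apply abel_mean_ge; [lra|exact Hm|apply Hex; lra].
Qed.

Lemma abel_convergent_opp (p : nat -> R) (l : R) :
  abel_convergent p l -> abel_convergent (fun n => - p n) (- l).
Proof.
  intros [Hex Hlim]; split.
  - intros x Hx; apply ex_series_ext with (fun k => opp (p k * x ^ k)).
    + intros; unfold opp; simpl; ring.
    + exact (ex_series_opp _ (Hex x Hx)).
  - eapply filterlim_ext;
      [|eapply filterlim_comp; [exact Hlim|exact (filterlim_opp (V := R_NormedModule) l)]].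
    intros x; simpl; unfold opp; simpl.
    rewrite (Series_ext (fun k => - p k * x ^ k) (fun k => - (p k * x ^ k))), Series_opp
      by (intros; ring).
    ring.
Qed.

Lemma abel_continuous_on_opp (E : R -> Prop) (f : R -> R) :
  abel_continuous_on E f -> abel_continuous_on E (fun x => - f x).
Proof.
  intros Hf p l Ep El Hp; apply (abel_convergent_opp (fun n => f (p n))), Hf; assumption.
Qed.

Lemma Rabs_mul_pow_unit_le (a x : R) (n : nat) :
  0 <= x <= 1 -> Rabs (a * x ^ n) <= Rabs a.
Proof.
  intros Hx; pose proof (pow_unit_bounds x n Hx); pose proof (Rabs_pos a).
  rewrite Rabs_mult, (Rabs_right (x ^ n)) by lra; nra.
Qed.

Lemma ex_series_Rabs_mul_pow_unit (a : nat -> R) (x : R) :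
  0 <= x <= 1 -> ex_series (fun n => Rabs (a n)) ->
  ex_series (fun n => Rabs (a n * x ^ n)).
Proof.
  intros Hx Ha; apply (ex_series_le (V := R_CompleteNormedModule)) with (2 := Ha).
  intros n; change (Rabs (Rabs (a n * x ^ n)) <= Rabs (a n)).
  rewrite Rabs_Rabsolu; apply Rabs_mul_pow_unit_le, Hx.
Qed.

Lemma Rabs_Series_mul_pow_unit_le (a : nat -> R) (x : R) :
  0 <= x <= 1 -> ex_series (fun n => Rabs (a n)) ->
  Rabs (Series (fun n => a n * x ^ n)) <= Series (fun n => Rabs (a n)).
Proof.
  intros Hx Ha; eapply Rle_trans.
  - apply Series_Rabs, ex_series_Rabs_mul_pow_unit; assumption.
  - apply Series_le; [|exact Ha].
    intros n; split; [apply Rabs_pos|apply Rabs_mul_pow_unit_le, Hx].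
Qed.

Lemma abel_convergent_of_summable_deviation (q : nat -> R) (l : R) :
  ex_series (fun n => Rabs (q n - l)) -> abel_convergent q l.
Proof.
  intros Hsum.
  assert (Hex : forall x, 0 <= x < 1 -> ex_series (fun k => q k * x ^ k)).
  { intros x Hx; apply ex_series_ext with (fun k => plus ((q k - l) * x ^ k) (l * x ^ k)).
    - intros; unfold plus; simpl; ring.
    - refine (ex_series_plus _ _ _ (ex_series_scal_geom l x Hx)).
      apply ex_series_Rabs, (ex_series_Rabs_mul_pow_unit (fun k => q k - l)); [lra|exact Hsum]. }
  split; [exact Hex|].
  set (M := Series (fun n => Rabs (q n - l))).
  assert (HM : 0 <= M) by (apply Series_nonneg; [intros; apply Rabs_pos|exact Hsum]).
  apply filterlim_locally; intros eps.
  assert (Hd : 0 < Rmin 1 (eps / (M + 1))).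
  { apply Rmin_pos; [lra|apply Rdiv_lt_0_compat; [apply cond_pos|lra]]. }
  exists (mkposreal _ Hd); intros y Hy Hy1.
  change (Rabs (y - 1) < Rmin 1 (eps / (M + 1))) in Hy.
  pose proof (Rmin_l 1 (eps / (M + 1))); pose proof (Rmin_r 1 (eps / (M + 1))).
  apply Rabs_def2 in Hy.
  assert (Hy0 : 0 <= y < 1) by lra.
  change (Rabs (abel_mean q y - l) < eps).
  rewrite (abel_mean_sub_const q l y Hy0 (Hex y Hy0)); unfold abel_mean.
  rewrite Rabs_mult, (Rabs_right (1 - y)) by lra.
  pose proof (Rabs_Series_mul_pow_unit_le (fun k => q k - l) y ltac:(lra) Hsum) as Hbound.
  assert (Hsmall : (1 - y) * (M + 1) < eps).
  { apply Rlt_le_trans with (eps / (M + 1) * (M + 1)).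
    - apply Rmult_lt_compat_r; lra.
    - right; field; lra. }
  apply Rle_lt_trans with ((1 - y) * M); [apply Rmult_le_compat_l; [lra|exact Hbound]|].
  nra.
Qed.

Lemma abel_continuous_upper_modulus (E : R -> Prop) (f : R -> R) (l eps : R) :
  abel_continuous_on E f -> E l -> 0 < eps ->
  exists d, 0 < d /\ forall x, E x -> Rabs (x - l) < d -> f x < f l + eps.
Proof.
  intros Hf El Heps; apply NNPP; intros Hno.
  assert (Hjump : forall n : nat, exists x,
             (E x /\ Rabs (x - l) <= (/ 2) ^ n) /\ f l + eps <= f x).
  { intros n; apply NNPP; intros Hn; apply Hno.
    exists ((/ 2) ^ n); split; [apply pow_lt; lra|].
    intros x Ex Hx; apply Rnot_le_lt; intros Hfx.
    apply Hn; exists x; split; [split; [exact Ex|lra]|exact Hfx]. }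
  destruct (choice _ Hjump) as [q Hq].
  assert (Hqconv : abel_convergent q l).
  { apply abel_convergent_of_summable_deviation.
    apply (ex_series_le (V := R_CompleteNormedModule)) with (fun n => (/ 2) ^ n).
    - intros n; change (Rabs (Rabs (q n - l)) <= (/ 2) ^ n).
      rewrite Rabs_Rabsolu; apply Hq.
    - eexists; apply is_series_geom_unit; lra. }
  assert (Hfq := Hf q l (fun n => proj1 (proj1 (Hq n))) El Hqconv).
  pose proof (abel_limit_ge _ _ _ Hfq (fun n => proj2 (Hq n))); lra.
Qed.

Lemma abel_continuous_continuous_at (E : R -> Prop) (f : R -> R) (l : R) :
  abel_continuous_on E f -> E l ->
  forall eps, 0 < eps -> exists d, 0 < d /\
    forall x, E x -> Rabs (x - l) < d -> Rabs (f x - f l) < eps.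
Proof.
  intros Hf El eps Heps.
  destruct (abel_continuous_upper_modulus E f l eps Hf El Heps) as [d1 [Hd1 Hup]].
  destruct (abel_continuous_upper_modulus E (fun x => - f x) l eps
              (abel_continuous_on_opp E f Hf) El Heps) as [d2 [Hd2 Hlow]].
  exists (Rmin d1 d2); split; [apply Rmin_pos; assumption|].
  intros x Ex Hx; pose proof (Rmin_l d1 d2); pose proof (Rmin_r d1 d2).
  specialize (Hup x Ex ltac:(lra)); specialize (Hlow x Ex ltac:(lra)).
  apply Rabs_def1; lra.
Qed.

Lemma filter_length_mono {A : Type} (P Q : A -> bool) (xs : list A) :
  (forall j, P j = true -> Q j = true) ->
  (length (filter P xs) <= length (filter Q xs))%nat.
Proof.
  intros H; induction xs as [|a xs IH]; simpl; [lia|].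
  destruct (P a) eqn:Pa; [rewrite (H a Pa); simpl; lia|].
  destruct (Q a); simpl; lia.
Qed.

Lemma lac_count_mono (k : nat -> nat) (p q : nat -> R) (l m d eps : R) (r : nat) :
  (forall j, eps <= Rabs (q j - m) -> d <= Rabs (p j - l)) ->
  (lac_count k q m eps r <= lac_count k p l d r)%nat.
Proof.
  intros H; apply filter_length_mono; intros j.
  destruct (Rle_dec eps (Rabs (q j - m))) as [Hq|]; [|discriminate].
  destruct (Rle_dec d (Rabs (p j - l))) as [|Hp]; [reflexivity|].
  intros _; contradiction (Hp (H j Hq)).
Qed.

Lemma lacunary_statistically_convergent_transfer (k : nat -> nat) (p q : nat -> R) (l m : R) :
  (forall eps, 0 < eps -> exists d, 0 < d /\
     forall j, Rabs (p j - l) < d -> Rabs (q j - m) < eps) ->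
  lacunary_statistically_convergent k p l ->
  lacunary_statistically_convergent k q m.
Proof.
  intros Hmod Hp eps Heps.
  destruct (Hmod eps Heps) as [d [Hd Hpq]].
  apply is_lim_seq_le_le with (fun _ => 0) (fun r => INR (lac_count k p l d r) / INR (lac_h k r));
    [|apply is_lim_seq_const|apply Hp, Hd].
  intros r; unfold Rdiv.
  assert (Hinv : 0 <= / INR (lac_h k r)).
  { destruct (Nat.eq_dec (lac_h k r) 0) as [->|Hh]; simpl; [rewrite Rinv_0; lra|].
    left; apply Rinv_0_lt_compat, lt_0_INR; lia. }
  split; [apply Rmult_le_pos; [apply pos_INR|exact Hinv]|].
  apply Rmult_le_compat_r; [exact Hinv|]; apply le_INR, lac_count_mono.
  intros j Hq; apply Rnot_lt_le; intros Hp'; pose proof (Hpq j Hp'); lra.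
Qed.

Theorem corollary3 (E : R -> Prop) (k : nat -> nat) (f : R -> R) :
  lacunary k ->
  abel_continuous_on E f ->
  lacunary_statistically_sequentially_continuous_on k E f.
Proof.
  intros _ Hf p l Ep El.
  apply lacunary_statistically_convergent_transfer.
  intros eps Heps.
  destruct (abel_continuous_continuous_at E f l Hf El eps Heps) as [d [Hd Hcont]].
  exists d; split; [exact Hd|].
  intros j; apply Hcont, Ep.
Qed.
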